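(* Fix $p\in[0,1]$, and let $C=\{(i,j)\in\mathcal{L}:i\in\{0,1\},\ j<0\}$. Let $A\supset B$ be infinite subsets of $C$. Then for every $n\ge0$, $$\mathbb{E}_p\big[u^n_{B\cup\{o\}}-u^n_B\big]\ge\mathbb{E}_p\big[u^n_{A\cup\{o\}}-u^n_A\big]\ge 2p.$$
   Context: Let $\mathcal{L}=\{(n,m)\in\mathbb{Z}^2:n\ge0,\ n+m\text{ even}\}$. Under $\mathbb{P}_p$, each site of $\mathcal{L}$ is independently open with probability $p$ and closed otherwise. For $z,z'\in\mathcal{L}$ write $z\to z'$ if there exist $k\ge0$ and sites $z=z_0,\dots,z_k=z'$ of $\mathcal{L}$ such that $z_0,\dots,z_{k-1}$ are open and $z_{i+1}-z_i\in\{(1,1),(2,0),(1,-1)\}$ for every $i$. Let $o=(0,0)$. For a set $A\subset\mathcal{L}$, let $\xi^n_A=\{x:z\to(n,x)\text{ for some }z\in A\}$ and $u^n_A=\sup\xi^n_A$, with $\sup\emptyset=-\infty$. *)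

From HB Require Import structures.
From mathcomp Require Import all_boot all_order all_algebra.
From mathcomp Require Import all_classical all_reals all_analysis.
Set Implicit Arguments. Unset Strict Implicit. Unset Printing Implicit Defensive.
Import Order.TTheory GRing.Theory Num.Theory.
Local Open Scope classical_set_scope.
Local Open Scope ring_scope.

Definition site := (int * int)%type.

Definition inL (z : site) : Prop := (0 <= z.1) /\ (2 %| z.1 + z.2)%Z.

Definition o : site := (0, 0).

Definition step (a b : site) : Prop :=
  (b.1 = a.1 + 1 /\ b.2 = a.2 + 1) \/
  (b.1 = a.1 + 2 /\ b.2 = a.2) \/
  (b.1 = a.1 + 1 /\ b.2 = a.2 - 1).

(* z -> z' for the configuration w (w z = true means z is open) *)
Definition reach (w : site -> bool) (z z' : site) : Prop :=
  exists (k : nat) (f : nat -> site),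
    [/\ f 0%N = z, f k = z',
        (forall i, (i <= k)%N -> inL (f i)) &
        (forall i, (i < k)%N -> w (f i) /\ step (f i) (f i.+1))].

Definition xi (w : site -> bool) (n : nat) (A : set site) : set int :=
  [set x | exists2 z, A z & reach w z (n%:Z, x)].

(* u^n_A = sup xi^n_A, with sup of the empty set = -oo *)
Definition u {R : realType} (w : site -> bool) (n : nat) (A : set site) : \bar R :=
  ereal_sup [set (x%:~R)%:E | x in xi w n A].

(* Difference a - b of extended reals, with the convention (-oo) - (-oo) = 0
   (mathcomp's default would give -oo). Otherwise it is the usual a - b. *)
Definition ediff {R : realType} (a b : \bar R) : \bar R :=
  if (a == -oo)%E && (b == -oo)%E then 0%E else (a - b)%E.

Definition Cset : set site :=
  [set z | inL z /\ (z.1 = 0 \/ z.1 = 1) /\ z.2 < 0].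

Definition bernoulli_field {R : realType} {d : measure_display}
  {T : measurableType d} (P : probability T R) (p : R) (w : T -> site -> bool) : Prop :=
  (forall z, inL z -> measurable [set t | w t z]) /\
  (forall z, inL z -> P [set t | w t z] = p%:E) /\
  (forall s : seq site, uniq s -> all (fun z => `[< inL z >]) s ->
     P (\big[setI/setT]_(z <- s) [set t | w t z]) = (p ^+ size s)%:E).

(** Write g_X := u^n_{X ∪ {o}} - u^n_X.  Since u^n_{X ∪ {o}} = max (u^n_X, u^n_{o}),
  g_X is antitone in X; this gives the first inequality and reduces the second one
  to X = C.  Pointwise, g_C is at least the number of integer levels y with
  u_C < y <= u_{C ∪ {o}}, hence E g_C >= sum_y (P(u_{C ∪ {o}} >= y) - P(u_C >= y)).

  Let D = C ∪ {o, (1,1)}, the translate of C by (0, 2), so P(u_D >= y) = P(u_C >= y - 2).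
  If o is open, (1,1) is reached from o and u_D = u_{C ∪ {o}}; if o is closed (and n > 0),
  o reaches nothing, u_D = u_{C ∪ {(1,1)}} and u_{C ∪ {o}} = u_C.  The state of o is
  independent of the events not involving o, so
    P(u_D >= y) - P(u_{C ∪ {o}} >= y) = (1 - p) (P(u_{C ∪ {(1,1)}} >= y) - P(u_C >= y)),
  which yields P(u_{C ∪ {o}} >= y) - P(u_C >= y) >= p (P(u_C >= y - 2) - P(u_C >= y)).
  Summing over y >= y0 telescopes to p (P(u_C >= y0 - 2) + P(u_C >= y0 - 1)); both
  probabilities tend to 1 as y0 -> -oo, because the first m up-right diagonals below o
  are disjoint and each of them is open with probability p^n.

  Probabilities of events that depend on finitely many sites are computed by
  conditioning on one site at a time; this gives their measurability, the needed
  independence, and their invariance under translation of the field. *)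

From Pilot Require Import Defs.
From HB Require Import structures.
From mathcomp Require Import all_boot all_order all_algebra.
From mathcomp Require Import all_classical all_reals all_analysis.
From mathcomp Require Import zify ring lra.
Import Order.TTheory GRing.Theory Num.Theory numFieldNormedType.Exports.
Local Open Scope classical_set_scope.
Local Open Scope ring_scope.
Set Implicit Arguments. Unset Strict Implicit.

(** * Paths in the lattice *)

Lemma step_bound (a b : site) : step a b ->
  a.1 + 1 <= b.1 /\ b.2 - a.2 <= b.1 - a.1 /\ a.2 - b.2 <= b.1 - a.1.
Proof. by case=> [[-> ->]|[[-> ->]|[-> ->]]]; lia. Qed.

Lemma path_bound (f : nat -> site) (k i j : nat) :
  (forall l, (l < k)%N -> step (f l) (f l.+1)) -> (i <= j <= k)%N ->
  (f i).1 + (j%:Z - i%:Z) <= (f j).1 /\ (f j).2 - (f i).2 <= (f j).1 - (f i).1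
  /\ (f i).2 - (f j).2 <= (f j).1 - (f i).1.
Proof.
move=> f_step; elim: j => [|j IHj] /andP [le_ij le_jk].
  have -> : i = 0%N by lia.
  lia.
have [lt_ij|->] : (i < j.+1 \/ i = j.+1)%N by lia.
  have := IHj (ltac:(lia)); have := step_bound (f_step j le_jk); lia.
lia.
Qed.

Lemma reach_bound (v : site -> bool) (z z' : site) : reach v z z' ->
  z.1 <= z'.1 /\ z'.2 - z.2 <= z'.1 - z.1 /\ z.2 - z'.2 <= z'.1 - z.1.
Proof.
case=> k [f [<- <- _ f_step]].
have := @path_bound f k 0 k (fun l lt_lk => (f_step l lt_lk).2) (leqnn k); lia.
Qed.

Lemma reach_refl (v : site -> bool) (z : site) : inL z -> reach v z z.
Proof. by move=> Lz; exists 0%N, (fun=> z); split=> // i; rewrite leqn0. Qed.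

Lemma reach_cons (v : site -> bool) (z z1 z2 : site) :
  v z -> inL z -> step z z1 -> reach v z1 z2 -> reach v z z2.
Proof.
move=> vz Lz st [k [f [f0 fk fL f_step]]].
exists k.+1, (fun i => if i is i'.+1 then f i' else z); split=> //; first by case.
by case=> [_|i lt_ik]; [rewrite f0|exact: f_step].
Qed.

Lemma reach_open (v : site -> bool) (z z' : site) : reach v z z' -> z <> z' -> v z.
Proof.
case=> [[|k]] [f [<- <- _ f_step]] neq_zz'; first by [].
exact: (f_step 0%N isT).1.
Qed.

Lemma reach_diagonal (v : site -> bool) (z : site) (m : nat) : inL z ->
  (forall i : nat, (i < m)%N -> v (z.1 + i%:Z, z.2 + i%:Z)) ->
  reach v z (z.1 + m%:Z, z.2 + m%:Z).
Proof.
case: z => a b [/= a_ge0 /dvdzP [c ab2]] v_diag.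
exists m, (fun i : nat => (a + i%:Z, b + i%:Z)); split=> /=.
- by congr pair; lia.
- by [].
- by move=> i _; split=> /=; [lia|apply/dvdzP; exists (c + i%:Z); lia].
- by move=> i lt_im; split; [exact: v_diag|left; split=> /=; lia].
Qed.

Definition vshift (k : int) (z : site) : site := (z.1, z.2 + 2 * k).

Lemma vshiftK (k : int) (z : site) : vshift (- k) (vshift k z) = z.
Proof. by case: z => a b; rewrite /vshift /=; congr pair; lia. Qed.

Lemma vshiftKV (k : int) (z : site) : vshift k (vshift (- k) z) = z.
Proof. by case: z => a b; rewrite /vshift /=; congr pair; lia. Qed.

Lemma inL_vshift (k : int) (z : site) : inL z -> inL (vshift k z).
Proof.
case: z => a b [/= a_ge0 /dvdzP [c ab2]]; split=> //=.
by apply/dvdzP; exists (c + k); lia.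
Qed.

Lemma step_vshift (k : int) (a b : site) : step a b -> step (vshift k a) (vshift k b).
Proof. by rewrite /step /vshift /=; lia. Qed.

Lemma reach_vshift (v : site -> bool) (k : int) (z z' : site) :
  reach (v \o vshift k) z z' -> reach v (vshift k z) (vshift k z').
Proof.
case=> m [f [<- <- fL f_step]]; exists m, (vshift k \o f); split=> //.
- by move=> i /fL; apply: inL_vshift.
- by move=> i /f_step [vf st]; split; [|exact: step_vshift].
Qed.

Lemma reach_vshiftE (v : site -> bool) (k : int) (z z' : site) :
  reach (v \o vshift k) z z' <-> reach v (vshift k z) (vshift k z').
Proof.
split; first exact: reach_vshift.
move=> r; rewrite -(vshiftK k z) -(vshiftK k z'); apply: reach_vshift.
by rewrite (_ : _ \o _ = v) //; apply: funext => s /=; rewrite vshiftKV.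
Qed.

(** * The sets C ∪ {o}, C ∪ {(1,1)} and C ∪ {o, (1,1)} *)

Definition Cset_o : set site := Cset `|` [set o].
Definition Cset_11 : set site := Cset `|` [set (1, 1)].
(* [Cset_up] is [Cset] translated by (0, 2): see [Cset_shift] and [Cset_up_shift]. *)
Definition Cset_up : set site := Cset_o `|` [set (1, 1)].

Lemma inL_o : inL o.
Proof. by split=> //; apply/dvdzP; exists 0. Qed.

Lemma inL_11 : inL (1, 1).
Proof. by split=> //; apply/dvdzP; exists 1. Qed.

Lemma Cset_sub_o : Cset `<=` Cset_o.
Proof. by move=> z; left. Qed.

Lemma Cset_o_sub_up : Cset_o `<=` Cset_up.
Proof. by move=> z; left. Qed.

Lemma Cset_11_sub_up : Cset_11 `<=` Cset_up.
Proof. by move=> z [Cz|->]; [left; left|right]. Qed.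

Lemma Cset_sub_up : Cset `<=` Cset_up.
Proof. by move=> z Cz; left; left. Qed.

Lemma Cset_up_11o : Cset_up = Cset_11 `|` [set o].
Proof. by rewrite /Cset_up /Cset_11 /Cset_o setUAC. Qed.

Lemma Cset_sub_11 : Cset `<=` Cset_11.
Proof. by move=> z; left. Qed.

Lemma Cset_up_bound (z : site) : Cset_up z -> 0 <= z.1 /\ z.1 <= 1 /\ z.2 <= z.1.
Proof. by case=> [[[[z1_ge0 /dvdzP [c e]] [z1 z2]]|->]|->] /=; lia. Qed.

Lemma Cset_bound (z : site) : Cset z -> 0 <= z.1 /\ z.1 <= 1 /\ z.2 <= z.1 - 2.
Proof. by case=> [[z1_ge0 /dvdzP [c e]] [z1 z2]]; lia. Qed.

Lemma Cset_notin_o : ~ Cset o.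
Proof. by case=> _ []. Qed.

Lemma Cset_shift (z : site) : Cset z -> Cset_up (vshift 1 z).
Proof.
case: z => a b /= [[/= a_ge0 /dvdzP [c ab2]] [/= a01 b_lt0]]; rewrite /vshift /=.
have [b_lt|[b2|b1]] : b + 2 < 0 \/ (b = -2 \/ b = -1) by lia.
- by left; left; split; [split=> //=; apply/dvdzP; exists (c + 1)|split=> /=]; lia.
- by left; right; rewrite /o; congr pair; lia.
- by right; congr pair; lia.
Qed.

Lemma Cset_up_shift (z : site) : Cset_up z -> Cset (vshift (- 1) z).
Proof.
move=> Dz; have [z1 [z1le z2]] := Cset_up_bound Dz.
split; last by rewrite /vshift /=; lia.
by apply: inL_vshift; case: Dz => [[[]|->]|->]; [|exact: inL_o|exact: inL_11].
Qed.

Lemma xi_Cset_up_bound (v : site -> bool) (n : nat) (X : set site) (x : int) :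
  X `<=` Cset_up -> xi v n X x -> x <= n%:Z.
Proof. by move=> XD [z /XD /Cset_up_bound Dz /reach_bound /=]; lia. Qed.

Lemma xi_Cset_bound (v : site -> bool) (n : nat) (X : set site) (x : int) :
  X `<=` Cset -> xi v n X x -> x <= n%:Z - 2.
Proof. by move=> XC [z /XC /Cset_bound Cz /reach_bound /=]; lia. Qed.

(** * The events u >= y *)

Definition reaches (n : nat) (X : set site) (y : int) (v : site -> bool) : bool :=
  `[< exists2 x, xi v n X x & y <= x >].

Lemma reaches_subset (n : nat) (X Y : set site) (y : int) (v : site -> bool) :
  X `<=` Y -> reaches n X y v -> reaches n Y y v.
Proof.
move=> XY /asboolP [x [z Xz r] le_yx]; apply/asboolP.
by exists x => //; exists z => //; apply: XY.
Qed.

Lemma reaches_setU (n : nat) (X Y : set site) (y : int) (v : site -> bool) :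
  reaches n (X `|` Y) y v = reaches n X y v || reaches n Y y v.
Proof.
apply/idP/orP => [/asboolP [x [z [Xz|Yz] r] le_yx]|[]].
- by left; apply/asboolP; exists x => //; exists z.
- by right; apply/asboolP; exists x => //; exists z.
- by apply: reaches_subset => z; left.
- by apply: reaches_subset => z; right.
Qed.

Lemma reaches_setU_closed_o (n : nat) (X : set site) (y : int) (v : site -> bool) :
  (0 < n)%N -> ~~ v o -> reaches n (X `|` [set o]) y v = reaches n X y v.
Proof.
move=> n_gt0 vo; rewrite reaches_setU orbC.
case/boolP: (reaches n [set o] y v) => //= /asboolP [x [z -> r] _].
have o_neq : o <> (n%:Z, x) by case; lia.
by rewrite (reach_open r o_neq) in vo.
Qed.

Lemma reaches_Cset_up_open_o (n : nat) (y : int) (v : site -> bool) :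
  v o -> reaches n Cset_up y v = reaches n Cset_o y v.
Proof.
move=> vo; apply/idP/idP; last exact: reaches_subset Cset_o_sub_up.
rewrite reaches_setU => /orP [//|/asboolP [x [z -> r] le_yx]].
apply/asboolP; exists x => //; exists o; first by right.
by apply: reach_cons vo inL_o _ r; left.
Qed.

Lemma reaches_Cset_up_diff_o (n : nat) (y : int) (v : site -> bool) : (0 < n)%N ->
  reaches n Cset_up y v && ~~ reaches n Cset_o y v =
  ~~ v o && (reaches n Cset_11 y v && ~~ reaches n Cset y v).
Proof.
move=> n_gt0; have [vo|nvo] := boolP (v o); first by rewrite reaches_Cset_up_open_o // andbN.
by rewrite Cset_up_11o /Cset_o !reaches_setU_closed_o.
Qed.

Lemma reaches_vshift (n : nat) (y : int) (v : site -> bool) :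
  reaches n Cset (y - 2) (v \o vshift 1) = reaches n Cset_up y v.
Proof.
apply/asboolP/asboolP => [[x [z Cz /reach_vshift r] le_yx]|[x [z Dz r] le_yx]].
  exists (x + 2); last lia.
  by exists (vshift 1 z); [exact: Cset_shift|move: r; rewrite /vshift /= mulr1].
exists (x - 2); last lia.
exists (vshift (- 1) z); first exact: Cset_up_shift.
by apply/reach_vshiftE; rewrite vshiftKV /vshift /= mulr1 subrK.
Qed.

Lemma sum_int_between_le (R : realType) (a Y : int) (s : R) (L : nat) : a%:~R <= s ->
  \sum_(k < L) ((a < Y + k%:Z) && ((Y + k%:Z)%:~R <= s))%:R <= s - a%:~R.
Proof.
elim: L a Y => [|L IHL] a Y le_as; first by rewrite big_ord0 subr_ge0.
rewrite big_ord_recl /= addr0.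
have liftE (k : 'I_L) : Y + (lift ord0 k)%:Z = Y + 1 + k%:Z by rewrite /= /bump /=; lia.
under eq_bigr => k _ do rewrite liftE.
have [le_Ya|lt_aY] := lerP Y a.
  by rewrite add0r; apply: IHL.
have [le_Ys|lt_sY] := lerP (Y%:~R : R) s; last first.
  rewrite andbF add0r big1 ?subr_ge0 // => k _.
  rewrite (_ : ((Y + 1 + k%:Z)%:~R <= s) = false) ?andbF //.
  by apply/negbTE; rewrite -ltNge (lt_le_trans lt_sY) // ler_int; lia.
have lt_aYk (k : 'I_L) : (a < Y + 1 + k%:Z) = (Y < Y + 1 + k%:Z) by apply/idP/idP; lia.
under eq_bigr => k _ do rewrite lt_aYk.
have := IHL Y (Y + 1) le_Ys; have : (a + 1)%:~R <= (Y%:~R : R) by rewrite ler_int; lia.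
rewrite intrD /=; lra.
Qed.

Section extended_real_facts.
Variable R : realType.
Local Open Scope ereal_scope.

Lemma ereal_sup_setU (X Y : set (\bar R)) :
  ereal_sup (X `|` Y) = maxe (ereal_sup X) (ereal_sup Y).
Proof.
apply/le_anti/andP; split.
  apply: ge_ereal_sup => x [] Xx; rewrite le_max (ereal_sup_ubound Xx) //.
  by rewrite orbT.
by rewrite ge_max; apply/andP; split; apply: ereal_sup_le => x Xx; [left|right].
Qed.

Lemma ediff_max_ge0 (a b : \bar R) : a < +oo -> 0 <= ediff (maxe a b) a.
Proof.
rewrite /ediff maxEle; case: a => [r||] //; case: b => [s||] //= _;
  rewrite ?leey ?leNye ?lee_fin /= //; try (case: (lerP r s) => /= ?);
  rewrite -?(@EFinD R) ?lee_fin ?addey ?addye ?leey //; lra.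
Qed.

Lemma ediff_max_antitone (a a' b : \bar R) : a <= a' -> a' < +oo ->
  ediff (maxe a' b) a' <= ediff (maxe a b) a.
Proof.
rewrite /ediff !maxEle; case: a' => [r'||]; case: a => [r||]; case: b => [s||] //=;
  rewrite ?leey ?leNye ?lee_fin /= // => *;
  try (case: (lerP r' s) => /= ?); try (case: (lerP r s) => /= ?);
  rewrite -?(@EFinD R) ?lee_fin ?addey ?addye ?leey //; lra.
Qed.

End extended_real_facts.

Section u_properties.
Variables (R : realType) (v : site -> bool) (n : nat).
Local Open Scope ereal_scope.
Local Notation u := (@u R v n).

Lemma u_setU (X Y : set site) : u (X `|` Y) = maxe (u X) (u Y).
Proof.
rewrite /Defs.u -ereal_sup_setU -image_setU; congr (ereal_sup (_ @` _)).
apply/seteqP; split=> x /=.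
  by case=> z [Xz|Yz] r; [left|right]; exists z.
by case=> -[z Zz r]; exists z => //; [left|right].
Qed.

Lemma u_subset (X Y : set site) : X `<=` Y -> u X <= u Y.
Proof.
move=> XY; apply: ereal_sup_le => _ [x [z Xz r] <-].
by exists x => //; exists z => //; apply: XY.
Qed.

Lemma reachesE (X : set site) (y : int) : reaches n X y v = ((y%:~R)%:E <= u X).
Proof.
apply/asboolP/idP => [[x xi_x le_yx]|le_yu].
  apply: (@le_trans _ _ (x%:~R)%:E); first by rewrite lee_fin ler_int.
  by apply: ereal_sup_ubound; exists x.
apply: contrapT => no_x; move: le_yu; apply/negP; rewrite -ltNge.
apply: (@le_lt_trans _ _ ((y - 1)%:~R)%:E); last by rewrite lte_fin ltr_int; lia.
apply: ge_ereal_sup => _ [x xi_x <-]; rewrite lee_fin ler_int.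
by rewrite leNgt; apply/negP => lt_y1x; apply: no_x; exists x => //; lia.
Qed.

Lemma u_le (X : set site) (M : int) :
  (forall x, xi v n X x -> (x <= M)%R) -> u X <= (M%:~R)%:E.
Proof. by move=> le_xM; apply: ge_ereal_sup => _ [x xi_x <-]; rewrite lee_fin ler_int le_xM. Qed.

Lemma u_Cset_up_lt_pinfty (X : set site) : X `<=` Cset_up -> u X < +oo.
Proof.
move=> XD; apply: le_lt_trans (ltey ((n%:Z)%:~R)%:E).
by apply: u_le => x; apply: xi_Cset_up_bound.
Qed.

Lemma u_Ny_or_int (X : set site) : X `<=` Cset_up ->
  u X = -oo \/ exists x : int, u X = (x%:~R)%:E.
Proof.
move=> XD; have [[x0 xi_x0]|no_x] := pselect (exists x, xi v n X x); last first.
  left; rewrite /Defs.u (_ : [set (x%:~R)%:E | x in xi v n X] = set0) ?ereal_sup0 //.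
  by apply/seteqP; split=> // t [x xi_x _]; apply: no_x; exists x.
right; have : (x0%:~R)%:E <= u X by rewrite -reachesE; apply/asboolP; exists x0.
move: (u_Cset_up_lt_pinfty XD); case E : (u X) => [s||] // _ _.
have : ((s - 1)%R)%:E < ereal_sup [set (x%:~R)%:E | x in xi v n X].
  by rewrite -/(u X) E lte_fin; lra.
case/ereal_sup_gt => _ [x xi_x <-]; rewrite lte_fin => lt_s1x.
exists x; apply/le_anti/andP; split; last by rewrite -E; apply: ereal_sup_ubound; exists x.
rewrite -E; apply: ge_ereal_sup => _ [x' xi_x' <-]; rewrite lee_fin ler_int.
have : (x'%:~R)%:E <= u X by apply: ereal_sup_ubound; exists x'.
rewrite E lee_fin => le_x's.
have : ((x'%:~R : R) < (x + 1)%:~R)%R by rewrite intrD; lra.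
by rewrite ltr_int; lia.
Qed.

Lemma sum_levels_le_ediff (X1 X2 : set site) (y0 : int) (L : nat) :
  X1 `<=` X2 -> X2 `<=` Cset_up ->
  \sum_(k < L) ((reaches n X2 (y0 + k%:Z) v && ~~ reaches n X1 (y0 + k%:Z) v)%:R : R)%:E
    <= ediff (u X2) (u X1).
Proof.
move=> X12 X2D; move: (u_subset X12) (u_Cset_up_lt_pinfty X2D).
under eq_bigr => k _ do rewrite !reachesE.
have [->|[a ->]] := u_Ny_or_int (subset_trans X12 X2D).
  case: (u X2) => [s||] // _ _.
    by rewrite /ediff /= leey.
  by rewrite big1 // => k _.
case: (u X2) => [s||] //; rewrite lee_fin => le_as _.
rewrite /ediff /= -EFinB sumEFin lee_fin.
apply: le_trans (sum_int_between_le y0 L le_as).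
by apply: ler_sum => k _; rewrite !lee_fin ler_int -ltNge andbC.
Qed.

Lemma ediff_u_setU1_ge0 (X : set site) : X `<=` Cset_up ->
  0 <= ediff (u (X `|` [set o])) (u X).
Proof. by move=> XD; rewrite u_setU; apply/ediff_max_ge0/u_Cset_up_lt_pinfty. Qed.

Lemma ediff_u_setU1_antitone (X Y : set site) : X `<=` Y -> Y `<=` Cset_up ->
  ediff (u (Y `|` [set o])) (u Y) <= ediff (u (X `|` [set o])) (u X).
Proof.
move=> XY YD; rewrite !u_setU.
by apply: ediff_max_antitone; [exact: u_subset|exact: u_Cset_up_lt_pinfty].
Qed.

End u_properties.

(** * Events depending on finitely many sites *)

Definition depends_on (S : seq site) (G : (site -> bool) -> bool) : Prop :=
  forall v v', {in S, v =1 v'} -> G v = G v'.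

Definition set_site (v : site -> bool) (z : site) (b : bool) : site -> bool :=
  fun s => if s == z then b else v s.

(* The probability of [G] when the sites of [S] are independent Bernoulli(p) and
   all other sites are closed. *)
Fixpoint bernoulli_prob (R : pzRingType) (p : R) (S : seq site)
    (G : (site -> bool) -> bool) : R :=
  if S is z :: S' then
    p * bernoulli_prob p S' (fun v => G (set_site v z true)) +
    (1 - p) * bernoulli_prob p S' (fun v => G (set_site v z false))
  else (G (fun=> false))%:R.

Lemma depends_on_nil (G : (site -> bool) -> bool) :
  depends_on [::] G -> forall v, G v = G (fun=> false).
Proof. by move=> dG v; apply: dG. Qed.

Lemma depends_on_cons (S : seq site) (z : site) (G : (site -> bool) -> bool) :
  depends_on (z :: S) G ->
  [/\ depends_on S (fun v => G (set_site v z true)),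
      depends_on S (fun v => G (set_site v z false)) &
      forall v, G v = if v z then G (set_site v z true) else G (set_site v z false)].
Proof.
have set_siteE v v' b : {in S, v =1 v'} -> {in z :: S, set_site v z b =1 set_site v' z b}.
  by move=> vv' s; rewrite inE /set_site; case: eqP => //= _ /vv'.
move=> dG; split=> [v v' /set_siteE vv'|v v' /set_siteE vv'|v]; try exact: dG (vv' _).
rewrite (dG v (set_site v z (v z))); first by case: (v z).
by move=> s _; rewrite /set_site; case: eqP => [->|].
Qed.

Lemma depends_on_andb (S : seq site) (G1 G2 : (site -> bool) -> bool) :
  depends_on S G1 -> depends_on S G2 -> depends_on S (fun v => G1 v && G2 v).
Proof. by move=> dG1 dG2 v v' vv'; rewrite (dG1 v v') // (dG2 v v'). Qed.

Lemma depends_on_negb (S : seq site) (G : (site -> bool) -> bool) :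
  depends_on S G -> depends_on S (fun v => ~~ G v).
Proof. by move=> dG v v' vv'; rewrite (dG v v'). Qed.

Lemma set_andbE (T : Type) (a b : T -> bool) :
  [set t | a t && b t] = [set t | a t] `&` [set t | b t].
Proof. by apply/seteqP; split=> t /=; [move/andP|move=> [-> ->]]. Qed.

Lemma in_set_boolE (T : Type) (b : T -> bool) (t : T) : (t \in [set t | b t]) = b t.
Proof. by apply/idP/idP => [/set_mem|/mem_set]. Qed.

Definition all_inL (s : seq site) : bool := all (fun z => `[< inL z >]) s.

Lemma measurable_if (d : measure_display) (T : measurableType d) (c a b : T -> bool) :
  measurable [set t | c t] -> measurable [set t | a t] -> measurable [set t | b t] ->
  measurable [set t | if c t then a t else b t].
Proof.
move=> mc ma mb; rewrite (_ : [set t | _] = ([set t | c t] `&` [set t | a t]) `|`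
    (~` [set t | c t] `&` [set t | b t])).
  by apply: measurableU; apply: measurableI => //; exact: measurableC.
by apply/seteqP; split=> t /=; case: (c t) => /=; [left|right|case=> -[]|case=> -[]].
Qed.

Section finitely_dependent_events.
Variables (R : realType) (d : measure_display) (T : measurableType d).
Variables (P : probability T R) (p : R) (w : T -> site -> bool).
Hypothesis w_bernoulli : bernoulli_field P p w.
Local Open Scope ereal_scope.

Lemma probability_setD (A B : set T) : measurable A -> measurable B -> B `<=` A ->
  P (A `\` B) = P A - P B.
Proof.
move=> mA mB BA; rewrite measureD ?(setIidr BA) //.
by apply: le_lt_trans (probability_le1 P mA) _; rewrite ltey.
Qed.

Lemma probability_negb_and (c g : T -> bool) :
  measurable [set t | c t] -> measurable [set t | g t] ->
  P [set t | ~~ c t && g t] = P [set t | g t] - P [set t | c t && g t].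
Proof.
move=> mc mg; rewrite -probability_setD //.
- congr (P _); apply/seteqP; split=> t /=; first by case: (c t).
  by case: (c t) => // -[].
- by rewrite set_andbE; exact: measurableI.
- by move=> t /= /andP [].
Qed.

Lemma probability_and_if (c e a b : T -> bool) :
  measurable [set t | c t] -> measurable [set t | e t] ->
  measurable [set t | a t] -> measurable [set t | b t] ->
  P [set t | e t && (if c t then a t else b t)] =
  P [set t | c t && e t && a t] +
    (P [set t | e t && b t] - P [set t | c t && e t && b t]).
Proof.
move=> mc me ma mb; have mI (f g h : T -> bool) : measurable [set t | f t] ->
    measurable [set t | g t] -> measurable [set t | h t] -> measurable [set t | f t && g t && h t].
  by move=> mf mg mh; rewrite !set_andbE; do 2 apply: measurableI => //.
have ceb_eb : [set t | c t && e t && b t] `<=` [set t | e t && b t].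
  by move=> t /= /andP [/andP [_ ->] ->].
rewrite -probability_setD //; last exact: mI.
  rewrite -measureU //.
  - congr (P _); apply/seteqP; split=> t /=; case: (c t) => /=.
    + by left.
    + by right; split.
    + by case=> // -[h []].
    + by case=> // -[].
  - exact: mI.
  - by apply: measurableD; [rewrite set_andbE; exact: measurableI|exact: mI].
  - by apply/seteqP; split=> // t /= [/andP [/andP [-> ->] _] [/andP [_ ->]]].
by rewrite set_andbE; exact: measurableI.
Qed.

Lemma measurable_all_open (s : seq site) : all_inL s -> measurable [set t | all (w t) s].
Proof.
elim: s => [_|z s IHs /= /andP [/asboolP Lz /IHs ms]].
  by rewrite (_ : [set t : T | true] = setT) //; apply/seteqP.
by rewrite set_andbE; apply: measurableI => //; apply: w_bernoulli.1.
Qed.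

Lemma prob_all_open (s : seq site) : uniq s -> all_inL s ->
  P [set t | all (w t) s] = (p ^+ size s)%:E.
Proof.
move=> us Ls; rewrite -(w_bernoulli.2.2 _ us Ls); congr (P _).
elim: s {us Ls} => [|z s IHs] /=; first by rewrite big_nil; apply/seteqP.
by rewrite big_cons -IHs set_andbE.
Qed.

Lemma prob_all_open_and (S s : seq site) (G : (site -> bool) -> bool) :
  uniq (s ++ S) -> all_inL (s ++ S) -> depends_on S G ->
  measurable [set t | G (w t)] /\
  P [set t | all (w t) s && G (w t)] = (p ^+ size s * bernoulli_prob p S G)%:E.
Proof.
elim: S s G => [|z S IHS] s G.
  rewrite cats0 /= => us Ls /depends_on_nil; case: (G (fun=> false)) => Gc.
    have -> : [set t | G (w t)] = setT by apply/seteqP; split=> // t _; rewrite /= Gc.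
    split; first exact: measurableT.
    by rewrite mulr1 -prob_all_open //; congr (P _); apply: eq_set => t; rewrite Gc andbT.
  have -> : [set t | G (w t)] = set0 by apply/seteqP; split=> // t; rewrite /= Gc.
  split; first exact: measurable0.
  rewrite mulr0 (_ : [set t | _ && _] = set0) ?measure0 //.
  by apply/seteqP; split=> // t; rewrite /= Gc andbF.
move=> usS LsS /depends_on_cons [dG1 dG0 Gsplit].
have perm_zs : perm_eq (s ++ z :: S) ((z :: s) ++ S) by rewrite -cat1s perm_catCA.
have uzs : uniq ((z :: s) ++ S) by rewrite -(perm_uniq perm_zs).
have Lzs : all_inL ((z :: s) ++ S) by rewrite /all_inL -(perm_all _ perm_zs).
have [Lz Ls] : inL z /\ all_inL (s ++ S) by case/andP: Lzs => /asboolP.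
have [Ls' _] : all_inL s /\ all_inL S by move: Ls; rewrite /all_inL all_cat => /andP.
have us : uniq (s ++ S) by case/andP: uzs.
have [mG1 P1] := IHS _ _ uzs Lzs dG1.
have [mG0 P0] := IHS _ _ us Ls dG0.
have [_ P0z] := IHS _ _ uzs Lzs dG0.
have mz : measurable [set t | w t z] := w_bernoulli.1 z Lz.
split; first by rewrite (eq_set (fun t => congr1 is_true (Gsplit (w t)))); exact: measurable_if.
rewrite (eq_set (fun t => congr1 (fun b => is_true (all (w t) s && b)) (Gsplit (w t)))).
rewrite probability_and_if //; last exact: measurable_all_open.
rewrite P1 P0 P0z -EFinB -EFinD.
by congr EFin; rewrite /= exprS; ring.
Qed.

Lemma measurable_depends_on (S : seq site) (G : (site -> bool) -> bool) :
  uniq S -> all_inL S -> depends_on S G -> measurable [set t | G (w t)].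
Proof. by move=> uS LS dG; case: (@prob_all_open_and S [::] G uS LS dG). Qed.

Lemma prob_depends_on (S : seq site) (G : (site -> bool) -> bool) :
  uniq S -> all_inL S -> depends_on S G ->
  P [set t | G (w t)] = (bernoulli_prob p S G)%:E.
Proof. by move=> uS LS dG; case: (@prob_all_open_and S [::] G uS LS dG) => _; rewrite mul1r. Qed.

Lemma prob_all_open_indep (S s : seq site) (G : (site -> bool) -> bool) :
  uniq (s ++ S) -> all_inL (s ++ S) -> depends_on S G ->
  P [set t | all (w t) s && G (w t)] = (p ^+ size s)%:E * P [set t | G (w t)].
Proof.
move=> usS LsS dG; have [_ ->] := prob_all_open_and usS LsS dG.
have uS : uniq S by move: usS; rewrite cat_uniq => /and3P [].
have LS : all_inL S by move: LsS; rewrite /all_inL all_cat => /andP [].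
by rewrite (prob_depends_on uS LS dG) EFinM.
Qed.

End finitely_dependent_events.

(** * Probabilities of the events u >= y *)

(* Every site visited before time [n] by a path from [Cset_up] to height at least [y]
   lies in [window n y true], and in [window n y false] unless the path starts at [o]. *)
Definition window (n : nat) (y : int) (with_o : bool) : seq site :=
  [seq s <- [seq (i%:Z, y - n%:Z + j%:Z) | i <- iota 0 n, j <- iota 0 (absz (2 * n%:Z + 2 - y)%R)]
     | `[< inL s >] && (with_o || (s != o))].

Lemma window_uniq (n : nat) (y : int) (with_o : bool) : uniq (window n y with_o).
Proof.
apply/filter_uniq/allpairs_uniq; try exact: iota_uniq.
by move=> [i j] [i' j'] _ _ [/= ii' jj']; congr pair; lia.
Qed.

Lemma window_all_inL (n : nat) (y : int) (with_o : bool) : all_inL (window n y with_o).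
Proof. by apply/allP => s; rewrite mem_filter => /andP [/andP []]. Qed.

Lemma mem_window (n : nat) (y : int) (with_o : bool) (s : site) :
  inL s -> with_o || (s != o) -> 0 <= s.1 -> s.1 < n%:Z -> y - n%:Z <= s.2 -> s.2 <= n%:Z + 1 ->
  s \in window n y with_o.
Proof.
move=> Ls so s1_ge0 s1_lt s2_ge s2_le; rewrite mem_filter so andbT.
apply/andP; split; first exact/asboolP.
apply/allpairsP; exists (absz s.1, absz (s.2 - (y - n%:Z))%R) => /=.
by rewrite !mem_iota; case: s {Ls so} s1_ge0 s1_lt s2_ge s2_le => a b /= *; split; [lia|lia|congr pair; lia].
Qed.

Lemma depends_on_reaches (n : nat) (y : int) (X : set site) (with_o : bool) :
  X `<=` Cset_up -> (~~ with_o -> ~ X o) -> depends_on (window n y with_o) (reaches n X y).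
Proof.
move=> XD Xo.
suff imp v v' : {in window n y with_o, v =1 v'} -> reaches n X y v -> reaches n X y v'.
  by move=> v v' vv'; apply/idP/idP; apply: imp => // s /vv'.
move=> vv' /asboolP [x [z Xz [k [f [f0 fk fL f_step]]]] le_yx].
apply/asboolP; exists x => //; exists z => //; exists k, f; split=> // i lt_ik.
rewrite -vv'; first exact: f_step.
have f_step' l : (l < k)%N -> step (f l) (f l.+1) by move=> /f_step [].
have [zi_ge0 [zi_le1 z2_le]] := Cset_up_bound (XD _ Xz).
have := @path_bound f k i k f_step' (ltac:(lia)).
have := @path_bound f k 0 i f_step' (ltac:(lia)).
rewrite f0 fk /= => bound_0i bound_ik.
apply: mem_window; try lia; first exact: fL (ltnW lt_ik).
have [//|/Xo nXo /=] := boolP with_o; apply/eqP => fio.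
have [i0|i_gt0] := posnP i; first by apply: nXo; rewrite -fio i0 f0.
by move: bound_0i; rewrite fio /=; lia.
Qed.

Lemma bernoulli_field_vshift (R : realType) (d : measure_display) (T : measurableType d)
    (P : probability T R) (p : R) (w : T -> site -> bool) (k : int) :
  bernoulli_field P p w -> bernoulli_field P p (fun t => w t \o vshift k).
Proof.
case=> mw [Pw Pall]; split; [|split].
- by move=> z Lz; exact: mw _ (inL_vshift k Lz).
- by move=> z Lz; exact: Pw _ (inL_vshift k Lz).
move=> s us Ls.
have us' : uniq (map (vshift k) s).
  by rewrite (map_inj_uniq _) // => a b /(congr1 (vshift (- k))); rewrite !vshiftK.
have Ls' : all (fun z => `[< inL z >]) (map (vshift k) s).
  by rewrite all_map; apply/allP => z /(allP Ls) /asboolP Lz; apply/asboolP/inL_vshift.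
by rewrite -(size_map (vshift k)) -(Pall _ us' Ls') big_map.
Qed.

(* The [k]-th diagonal is the up-right path of length [n] from [(0, -2k-2)], a site of
   [Cset]; distinct diagonals are disjoint. *)
Definition diagonal (n k : nat) : seq site :=
  [seq (i%:Z, i%:Z - 2 * k%:Z - 2) | i <- iota 0 n].

Fixpoint diagonals (n m : nat) : seq site :=
  if m is m'.+1 then diagonal n m' ++ diagonals n m' else [::].

Definition no_open_diagonal (n m : nat) (v : site -> bool) : bool :=
  all (fun k => ~~ all v (diagonal n k)) (iota 0 m).

Lemma mem_diagonal (n k : nat) (s : site) : s \in diagonal n k ->
  inL s /\ s.1 - s.2 = 2 * k%:Z + 2.
Proof.
case/mapP => i _ -> /=; split; last lia.
by split=> /=; [|apply/dvdzP; exists (i%:Z - k%:Z - 1)]; lia.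
Qed.

Lemma diagonal_uniq (n k : nat) : uniq (diagonal n k).
Proof. by rewrite map_inj_uniq ?iota_uniq // => i j [ij _]; lia. Qed.

Lemma mem_diagonals (n m : nat) (s : site) : s \in diagonals n m ->
  inL s /\ s.1 - s.2 <= 2 * m%:Z.
Proof.
elim: m => [|m IHm] //=; rewrite mem_cat => /orP [/mem_diagonal|/IHm] [Ls ds]; split=> //; lia.
Qed.

Lemma diagonals_uniq (n m : nat) : uniq (diagonals n m).
Proof.
elim: m => [|m IHm] //=; rewrite cat_uniq diagonal_uniq IHm andbT /=.
apply/hasPn => s /mem_diagonals [_ ds]; apply/negP => /mem_diagonal [_ ds']; lia.
Qed.

Lemma diagonals_all_inL (n m : nat) : all_inL (diagonals n m).
Proof. by apply/allP => s /mem_diagonals [Ls _]; apply/asboolP. Qed.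

Lemma diagonal_sub (n m k : nat) : (k < m)%N -> {subset diagonal n k <= diagonals n m}.
Proof.
elim: m => [|m IHm] // lt_km s ds /=; rewrite mem_cat.
have [lt_km'|<-] : (k < m)%N \/ k = m by lia.
  by rewrite IHm ?orbT.
by rewrite ds.
Qed.

Lemma depends_on_no_open_diagonal (n m : nat) :
  depends_on (diagonals n m) (no_open_diagonal n m).
Proof.
move=> v v' vv'; apply: eq_in_all => k; rewrite mem_iota add0n => /andP [_ lt_km].
by congr negb; apply: eq_in_all => s /(diagonal_sub lt_km) /vv'.
Qed.

Lemma no_open_diagonalS (n m : nat) (v : site -> bool) :
  no_open_diagonal n m.+1 v = no_open_diagonal n m v && ~~ all v (diagonal n m).
Proof. by rewrite /no_open_diagonal -addn1 iotaD all_cat /= andbT. Qed.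

Lemma telescope2_sumr (R : comNzRingType) (g : int -> R) (y : int) (L : nat) :
  \sum_(k < L) (g (y + k%:Z - 2) - g (y + k%:Z)) =
  g (y - 2) + g (y - 1) - g (y + L%:Z - 2) - g (y + L%:Z - 1).
Proof.
elim: L => [|L IHL]; first by rewrite big_ord0 addr0; ring.
rewrite big_ord_recr /= IHL.
have -> : y + L.+1%:Z - 2 = y + L%:Z - 1 by lia.
have -> : y + L.+1%:Z - 1 = y + L%:Z by lia.
ring.
Qed.

Section level_events.
Variables (R : realType) (d : measure_display) (T : measurableType d).
Variables (P : probability T R) (p : R) (w : T -> site -> bool).
Hypothesis w_bernoulli : bernoulli_field P p w.
Variable n : nat.

Definition event_ge (X : set site) (y : int) : set T := [set t | reaches n X y (w t)].

Definition prob_ge (X : set site) (y : int) : R := fine (P (event_ge X y)).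

Lemma measurable_event_ge (X : set site) (y : int) :
  X `<=` Cset_up -> measurable (event_ge X y).
Proof.
move=> XD; apply: (measurable_depends_on w_bernoulli (window_uniq n y true)).
  exact: window_all_inL.
exact: depends_on_reaches.
Qed.

Lemma P_event_ge (X : set site) (y : int) :
  X `<=` Cset_up -> P (event_ge X y) = (prob_ge X y)%:E.
Proof. by move=> XD; rewrite fineK // fin_num_measure //; exact: measurable_event_ge. Qed.

Lemma event_ge_subset (X Y : set site) (y : int) : X `<=` Y -> event_ge X y `<=` event_ge Y y.
Proof. by move=> XY t; apply: reaches_subset. Qed.

Lemma event_ge_setD (X Y : set site) (y : int) :
  event_ge Y y `\` event_ge X y = [set t | reaches n Y y (w t) && ~~ reaches n X y (w t)].
Proof.
apply/seteqP; split=> t; rewrite /event_ge /=; first by move=> [-> /negP].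
by move=> /andP [-> /negP].
Qed.

Lemma prob_ge_setD (X Y : set site) (y : int) : X `<=` Y -> Y `<=` Cset_up ->
  P (event_ge Y y `\` event_ge X y) = (prob_ge Y y - prob_ge X y)%:E.
Proof.
move=> XY YD; have XD := subset_trans XY YD.
rewrite probability_setD ?P_event_ge ?EFinB //; last exact: event_ge_subset.
  exact: measurable_event_ge.
exact: measurable_event_ge.
Qed.

Lemma prob_ge_subset (X Y : set site) (y : int) :
  X `<=` Y -> Y `<=` Cset_up -> prob_ge X y <= prob_ge Y y.
Proof.
move=> XY YD; have XD := subset_trans XY YD.
rewrite -lee_fin -!P_event_ge //; apply: le_measure; last exact: event_ge_subset.
  by rewrite inE; exact: measurable_event_ge.
by rewrite inE; exact: measurable_event_ge.
Qed.

Lemma prob_ge_Cset_up (y : int) : prob_ge Cset_up y = prob_ge Cset (y - 2).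
Proof.
have dC := @depends_on_reaches n (y - 2) Cset true Cset_sub_up (fun=> Cset_notin_o).
rewrite /prob_ge (_ : event_ge Cset_up y = [set t | reaches n Cset (y - 2) (w t \o vshift 1)]).
  have [uW LW] := (window_uniq n (y - 2) true, window_all_inL n (y - 2) true).
  rewrite (prob_depends_on (bernoulli_field_vshift 1 w_bernoulli) uW LW dC).
  by rewrite /event_ge (prob_depends_on w_bernoulli uW LW dC).
by apply/seteqP; split=> t; rewrite /= reaches_vshift.
Qed.

Lemma prob_ge_Cset_up_sub_o (y : int) : (0 < n)%N ->
  prob_ge Cset_up y - prob_ge Cset_o y = (1 - p) * (prob_ge Cset_11 y - prob_ge Cset y).
Proof.
move=> n_gt0.
pose F v := reaches n Cset_11 y v && ~~ reaches n Cset y v.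
have dF : depends_on (window n y false) F.
  apply: depends_on_andb; last apply: depends_on_negb; apply: depends_on_reaches => //.
  - exact: Cset_11_sub_up.
  - by move=> _ [/Cset_notin_o|].
  - exact: Cset_sub_up.
  - by move=> _; exact: Cset_notin_o.
have Lo : all_inL [:: o] by rewrite /all_inL /= andbT; apply/asboolP/inL_o.
have uoW : uniq ([:: o] ++ window n y false).
  by rewrite /= window_uniq andbT mem_filter eqxx andbF.
have LoW : all_inL ([:: o] ++ window n y false).
  by rewrite /all_inL all_cat; apply/andP; split; [exact: Lo|exact: window_all_inL].
have mF := measurable_depends_on w_bernoulli (window_uniq n y false) (window_all_inL n y false) dF.
have PF : P [set t | F (w t)] = (prob_ge Cset_11 y - prob_ge Cset y)%:E.
  by rewrite -prob_ge_setD -?event_ge_setD //; [exact: Cset_sub_11|exact: Cset_11_sub_up].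
apply: EFin_inj; rewrite -prob_ge_setD //; last exact: Cset_o_sub_up.
rewrite event_ge_setD (eq_set (fun t => congr1 is_true (reaches_Cset_up_diff_o y (w t) n_gt0))).
rewrite probability_negb_and //; last exact: w_bernoulli.1 o inL_o.
have PoF : P [set t | w t o && F (w t)] = (p%:E * P [set t | F (w t)])%E.
  rewrite -[p]expr1 -(prob_all_open_indep w_bernoulli uoW LoW dF).
  by congr (P _); apply: eq_set => t; rewrite /= andbT.
by rewrite PoF PF -EFinM -EFinB; congr EFin; ring.
Qed.

Lemma prob_ge_Cset_step (y : int) : (0 < n)%N -> p <= 1 ->
  p * (prob_ge Cset (y - 2) - prob_ge Cset y) <= prob_ge Cset_o y - prob_ge Cset y.
Proof.
move=> n_gt0 p_le1; have key := prob_ge_Cset_up_sub_o y n_gt0.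
have le_11 := prob_ge_subset y Cset_11_sub_up (@subset_refl _ Cset_up).
have le_Co := prob_ge_subset y Cset_sub_o Cset_o_sub_up.
have : (1 - p) * (prob_ge Cset_11 y - prob_ge Cset y) <=
    (1 - p) * (prob_ge Cset_up y - prob_ge Cset y) by apply: ler_wpM2l; lra.
by rewrite -prob_ge_Cset_up; lra.
Qed.

Lemma prob_ge_Cset_high (y : int) : n%:Z - 1 <= y -> prob_ge Cset y = 0.
Proof.
move=> le_y; rewrite /prob_ge (_ : event_ge Cset y = set0) ?measure0 //.
apply/seteqP; split=> // t; rewrite /event_ge /= => /asboolP [x xi_x le_yx].
by have := xi_Cset_bound (@subset_refl _ Cset) xi_x; lia.
Qed.

Lemma prob_no_open_diagonal (m : nat) :
  P [set t | no_open_diagonal n m (w t)] = ((1 - p ^+ n) ^+ m)%:E.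
Proof.
have mD k := measurable_depends_on w_bernoulli (diagonals_uniq n k) (diagonals_all_inL n k)
  (@depends_on_no_open_diagonal n k).
elim: m => [|m IHm].
  by rewrite expr0 -(probability_setT P); congr (P _); apply/seteqP.
have [uDm LDm] := (diagonals_uniq n m.+1, diagonals_all_inL n m.+1).
have LD : all_inL (diagonal n m) by move: LDm; rewrite /all_inL all_cat => /andP [].
have mDD : measurable [set t | all (w t) (diagonal n m) && no_open_diagonal n m (w t)].
  by rewrite set_andbE; apply: measurableI => //; exact (measurable_all_open w_bernoulli LD).
rewrite (_ : [set t | _] = [set t | no_open_diagonal n m (w t)] `\`
    [set t | all (w t) (diagonal n m) && no_open_diagonal n m (w t)]).
  rewrite probability_setD //; last by move=> t /andP [].
  rewrite (prob_all_open_indep w_bernoulli uDm LDm (@depends_on_no_open_diagonal n m)).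
  by rewrite IHm size_map size_iota -EFinM -EFinB exprS; congr EFin; ring.
apply/seteqP; split=> t /=; rewrite no_open_diagonalS.
  by move=> /andP [-> /negP nall]; split=> // /andP [].
by move=> [-> nall]; apply/negP => all_d; apply: nall; rewrite all_d.
Qed.

Lemma prob_ge_Cset_low (m : nat) (y : int) : y <= n%:Z - 2 * m%:Z ->
  1 - (1 - p ^+ n) ^+ m <= prob_ge Cset y.
Proof.
move=> le_y.
have mD := measurable_depends_on w_bernoulli (diagonals_uniq n m) (diagonals_all_inL n m)
  (@depends_on_no_open_diagonal n m).
have open_diag : ~` [set t | no_open_diagonal n m (w t)] `<=` event_ge Cset y.
  move=> t /= /negP /allPn [k]; rewrite mem_iota => /andP [_ lt_km] /negPn all_d.
  have Lk : inL (0, - 2 * k%:Z - 2) by split=> //=; apply/dvdzP; exists (- k%:Z - 1); lia.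
  apply/asboolP; exists (n%:Z - 2 * k%:Z - 2); last lia.
  exists (0, - 2 * k%:Z - 2); first by split=> //; split=> /=; [left|lia].
  have := @reach_diagonal (w t) (0, - 2 * k%:Z - 2) n Lk.
  rewrite /= add0r (_ : - 2 * k%:Z - 2 + n%:Z = n%:Z - 2 * k%:Z - 2); last lia.
  apply=> i lt_in; move/allP: all_d; apply; apply/mapP; exists i; first by rewrite mem_iota.
  by congr pair; lia.
have : (P (~` [set t | no_open_diagonal n m (w t)]) <= P (event_ge Cset y))%E.
  by apply: le_measure open_diag; rewrite inE; [exact: measurableC|exact: measurable_event_ge y Cset_sub_up].
by rewrite probability_setC // prob_no_open_diagonal (P_event_ge y Cset_sub_up).
Qed.

Lemma sum_prob_ge_Cset_o_ge (m : nat) : (0 < n)%N -> 0 <= p <= 1 ->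
  2 * p * (1 - (1 - p ^+ n) ^+ m) <=
  \sum_(k < 2 * m + 2) (prob_ge Cset_o (n%:Z - 2 * m%:Z + 1 + k%:Z) -
                        prob_ge Cset (n%:Z - 2 * m%:Z + 1 + k%:Z)).
Proof.
move=> n_gt0 /andP [p_ge0 p_le1]; set y := n%:Z - 2 * m%:Z + 1.
apply: le_trans _ (ler_sum _ (fun (k : 'I_(2 * m + 2)) (_ : true) =>
  prob_ge_Cset_step (y + k%:Z) n_gt0 p_le1)).
rewrite -mulr_sumr (telescope2_sumr (prob_ge Cset)).
have [high1 high2] : prob_ge Cset (y + (2 * m + 2)%N%:Z - 2) = 0 /\
    prob_ge Cset (y + (2 * m + 2)%N%:Z - 1) = 0.
  by split; apply: prob_ge_Cset_high; rewrite /y; lia.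
have low1 := @prob_ge_Cset_low m (y - 2) (ltac:(rewrite /y; lia)).
have low2 := @prob_ge_Cset_low m (y - 1) (ltac:(rewrite /y; lia)).
rewrite high1 high2 !subr0.
have : p * (2 * (1 - (1 - p ^+ n) ^+ m)) <=
    p * (prob_ge Cset (y - 2) + prob_ge Cset (y - 1)) by apply: ler_wpM2l; lra.
lra.
Qed.

End level_events.

(** * The expected gain *)

Lemma geometric_lower_bound (R : realType) (a q : R) (I : \bar R) : `|q| < 1 ->
  (forall m : nat, (a * (1 - q ^+ m))%:E <= I)%E -> (a%:E <= I)%E.
Proof.
move=> q_lt1; case: I => [r||] le_aI; rewrite ?leey //; last first.
  by have := le_aI 0%N; rewrite expr0 subrr mulr0.
have cvg_a : (fun m : nat => a * (1 - q ^+ m)) @ \oo --> a * (1 - 0).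
  by apply: cvgMr; apply: cvgB; [exact: cvg_cst|exact: cvg_expr q_lt1].
rewrite subr0 mulr1 in cvg_a.
rewrite lee_fin; apply: (ler_cvg_to cvg_a (cvg_cst r)).
by apply: nearW => m; rewrite -lee_fin; exact: le_aI.
Qed.

(* Unlike [ge0_le_integral], no measurability is required: the gain is not shown
   to be measurable. *)
Lemma ge0_le_integral_nonmeas (R : realType) (d : measure_display) (T : measurableType d)
    (mu : {measure set T -> \bar R}) (f g : T -> \bar R) :
  (forall t, 0 <= f t)%E -> (forall t, f t <= g t)%E ->
  (\int[mu]_t f t <= \int[mu]_t g t)%E.
Proof.
move=> f_ge0 le_fg; have g_ge0 t : (0 <= g t)%E := le_trans (f_ge0 t) (le_fg t).
rewrite (ge0_integralTE mu f_ge0) (ge0_integralTE mu g_ge0).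
apply: ereal_sup_le => _ [h le_hf <-]; exists h => //= t.
exact: le_trans (le_hf t) (le_fg t).
Qed.

Lemma ediff_u_Cset_time0 (R : realType) (v : site -> bool) :
  (2%:E <= ediff (u (R:=R) v 0 (Cset `|` [set o])) (u v 0 Cset))%E.
Proof.
have -> : u (R:=R) v 0 (Cset `|` [set o]) = 0%E.
  apply/le_anti/andP; split.
    by apply: (u_le R (M := 0)) => x; apply: xi_Cset_up_bound; exact: Cset_o_sub_up.
  rewrite (_ : 0%E = ((0 : int)%:~R)%:E) // -reachesE; apply/asboolP; exists 0 => //.
  by exists o; [right|exact: reach_refl inL_o].
have : (u (R:=R) v 0 Cset <= ((-2 : int)%:~R)%:E)%E.
  by apply: (u_le R) => x /(xi_Cset_bound (@subset_refl _ Cset)); rewrite sub0r.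
case: (u v 0 Cset) => [r||] //= le_r2; rewrite /ediff /=; last exact: leey.
by rewrite -EFinB lee_fin; move: le_r2; rewrite lee_fin; lra.
Qed.

Section expected_gain.
Variables (R : realType) (d : measure_display) (T : measurableType d).
Variables (P : probability T R) (p : R) (w : T -> site -> bool).
Hypothesis w_bernoulli : bernoulli_field P p w.
Variable n : nat.

Definition gain (X : set site) (t : T) : \bar R :=
  ediff (u (w t) n (X `|` [set o])) (u (w t) n X).

Lemma integral_gain_antitone (X Y : set site) : X `<=` Y -> Y `<=` Cset_up ->
  (\int[P]_t gain Y t <= \int[P]_t gain X t)%E.
Proof.
move=> XY YD; apply: ge0_le_integral_nonmeas => t; first exact: ediff_u_setU1_ge0.
exact: ediff_u_setU1_antitone.
Qed.

Lemma integral_gain_Cset_ge_sum (y : int) (L : nat) :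
  ((\sum_(k < L) (prob_ge P w n Cset_o (y + k%:Z) - prob_ge P w n Cset (y + k%:Z)))%:E
    <= \int[P]_t gain Cset t)%E.
Proof.
pose E (k : 'I_L) := event_ge w n Cset_o (y + k%:Z) `\` event_ge w n Cset (y + k%:Z).
have mE k : measurable (E k).
  apply: measurableD; first exact (measurable_event_ge w_bernoulli n _ Cset_o_sub_up).
  exact (measurable_event_ge w_bernoulli n _ Cset_sub_up).
apply: (@le_trans _ _ (\int[P]_t (\sum_(k < L) (\1_(E k) t)%:E))%E).
  rewrite integral_sum //; last by move=> k; exact: integrable_indic.
  rewrite [X in (_ <= X)%E](eq_bigr (fun k : 'I_L =>
    (prob_ge P w n Cset_o (y + k%:Z) - prob_ge P w n Cset (y + k%:Z))%:E)) ?sumEFin //.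
  move=> k _; rewrite integral_indic // setIT.
  exact (prob_ge_setD w_bernoulli n _ Cset_sub_o Cset_o_sub_up).
apply: ge0_le_integral_nonmeas => t; first by apply: sume_ge0 => k _; rewrite lee_fin.
rewrite (eq_bigr (fun k : 'I_L =>
    ((reaches n Cset_o (y + k%:Z) (w t) && ~~ reaches n Cset (y + k%:Z) (w t))%:R : R)%:E)).
  exact (sum_levels_le_ediff R (w t) n y L Cset_sub_o Cset_o_sub_up).
by move=> k _; rewrite indicE /E event_ge_setD in_set_boolE.
Qed.

Lemma integral_gain_Cset : 0 <= p <= 1 -> ((2 * p)%:E <= \int[P]_t gain Cset t)%E.
Proof.
move=> p01; have [p_ge0 p_le1] := andP p01.
have gain_ge0 t : (0 <= gain Cset t)%E by exact: ediff_u_setU1_ge0 Cset_sub_up.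
have [n0|n_gt0] := posnP n.
  apply: (@le_trans _ _ (\int[P]_t (cst 2%:E) t)%E).
    rewrite integral_cst // [X in (_ * X)%E](_ : _ = 1%E); last exact: probability_setT.
    by rewrite mule1 lee_fin; lra.
  apply: ge0_le_integral_nonmeas => t; first by rewrite lee_fin.
  by rewrite /gain n0; exact: ediff_u_Cset_time0.
have [p0|p_neq0] := eqVneq p 0.
  by rewrite p0 mulr0; apply: integral_ge0 => t _; exact: gain_ge0.
have [pn_gt0 pn_le1] : 0 < p ^+ n /\ p ^+ n <= 1.
  by split; [apply: exprn_gt0; rewrite lt_def p_neq0|exact: exprn_ile1].
apply: (geometric_lower_bound (q := 1 - p ^+ n)) => [|m].
  by rewrite ger0_norm; lra.
apply: le_trans (integral_gain_Cset_ge_sum _ _); rewrite lee_fin.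
exact: sum_prob_ge_Cset_o_ge.
Qed.

End expected_gain.

Unset Implicit Arguments.

Theorem lemma2p3 (R : realType) (d : measure_display) (T : measurableType d)
  (P : probability T R) (p : R) (w : T -> site -> bool)
  (A B : set site) (n : nat) :
  0 <= p <= 1 ->
  bernoulli_field P p w ->
  A `<=` Cset -> B `<=` A -> infinite_set A -> infinite_set B ->
  ((\int[P]_t ediff (u (w t) n (B `|` [set o])) (u (w t) n B)
    >= \int[P]_t ediff (u (w t) n (A `|` [set o])) (u (w t) n A))
   /\ (\int[P]_t ediff (u (w t) n (A `|` [set o])) (u (w t) n A)
    >= (2 * p)%:E))%E.
Proof.
move=> p01 w_bernoulli AC BA _ _.
have AD := subset_trans AC Cset_sub_up.
split; first exact (integral_gain_antitone P w n BA AD).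
exact (le_trans (integral_gain_Cset w_bernoulli n p01) (integral_gain_antitone P w n AC Cset_sub_up)).
Qed.
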